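(* For every $f\in F$, $\ell(x_0f)=\ell(f)\pm1$. More precisely, $\ell(x_0f)=\ell(f)+1$ if at least one of the following holds, and $\ell(x_0f)=\ell(f)-1$ otherwise: (1) the reduced forest diagram of $x_0f$ has larger support than that of $f$; (2) the right space of $f$ has bottom label $L$, and left-multiplication by $x_0$ does not remove this space from the support; (3) the right space of $f$ has label pair $(R,I)$.
   Context: Thompson's group $F$ is realized as the group of all orientation-preserving piecewise-linear homeomorphisms $f$ of $\mathbb R$ with finitely many breakpoints, all breakpoints having dyadic rational coordinates, all slopes integral powers of $2$, and with $f(t)=t-m$ for all sufficiently negative $t$ and $f(t)=t-n$ for all sufficiently positive $t$, for some integers $m,n$. Products are compositions of functions: $fg=f\circ g$. The generators are $x_0(t)=t-1$ and $x_1(t)=t$ for $t\le 0$, $x_1(t)=t/2$ for $0\le t\le 2$, $x_1(t)=t-1$ for $t\ge 2$. A forest diagram for $x_0f$ is obtained from one for $f$ by moving the top pointer one tree to the right. Forest diagrams: a binary forest is a sequence $(T_i)_{i\in\mathbb Z}$ of finite rooted binary trees (every node has $0$ or $2$ children; internal nodes are called carets; a trivial tree is a single leaf), all but finitely many trivial, together with a pointer marking $T_0$. Tree $T_i$ represents the interval $[i,i+1]$, each caret represents halving the interval of its node, and the leaves of the forest give a dyadic subdivision of $\mathbb R$. A forest diagram for $f$ is a pair of binary forests, the bottom (domain) forest with subdivision $\mathcal D$ and the top (range) forest with subdivision $\mathcal R$, such that $f$ maps each interval of $\mathcal D$ linearly onto an interval of $\mathcal R$; this matches the leaves of the two forests by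 an order-preserving bijection, so the two forests share one linearly ordered set of leaves (columns). A reduction deletes an opposing pair of carets, i.e. a top caret and a bottom caret both of whose children are leaves and which have the same two (matched) leaves. A forest diagram is reduced if no reduction is possible; every element of $F$ has a unique reduced forest diagram. The support of a forest diagram is the smallest set of consecutive columns containing all leaves of nontrivial trees of either forest and the leaves of the two trees marked by the two pointers. A space is a gap between two consecutive columns; the spaces in the support are the gaps between consecutive columns of the support. The current tree of $f$ is the tree of the top forest (of the reduced diagram) marked by the top pointer; the right (resp. left) space of $f$ is the space immediately to the right (resp. left) of the current tree. Labels: in each of the two forests separately (using that forest's own pointer), a space is interior if the leaves on both sides of it belong to the same tree and exterior otherwise; it lies immediately to the left of a caret $c$ of that forest if the leaf immediately to its right is the leftmost leaf descending from $c$. Each space of the support receives a label in each forest: $L$ if it is exterior and to the left of the tree marked by the pointer; otherwise $N$ if it lies immediately to the left of some caret; otherwise $R$ if it is exterior (hence to the right of the marked tree); otherwise $I$ (interior). A space thus has a label pair (top label, bottom label); spaces outside the support are unlabeled. Weights, by (top, bottom): $(L,L)=2$, $(L,N)=1$, $(L,R)=1$, $(L,I)=1$; $(N,L)=1$, $(N,N)=2$, $(N,R)=2$, $(N,I)=2$; $(R,L)=1$, $(R,N)=2$, $(R,R)=2$, $(R,I)=0$; $(I,L)=1$, $(I,N)=2$, $(I,R)=0$, $(I,I)=0$. For $f\in F$, $\ell(f)=\ell_0(f)+\ell_1(f)$, where $\ell_0(f)$ is the sum of the weights of the spaces in the support of the reduced forest diagram of $f$ and $\ell_1(f)$ is its total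 number of carets; $\ell(f)$ equals the word length of $f$ with respect to $\{x_0,x_1\}$. *)

From mathcomp Require Import all_boot all_order all_algebra.
From mathcomp Require Import boolp classical_sets fsbigop.
From mathcomp Require Import zify.
Set Implicit Arguments. Unset Strict Implicit. Unset Printing Implicit Defensive.
Import Order.TTheory GRing.Theory Num.Theory.

Inductive tree := Leaf | Node of tree & tree.

Fixpoint tleaves (t : tree) : nat :=
  match t with Leaf => 1%N | Node l r => (tleaves l + tleaves r)%N end.

Fixpoint tcarets (t : tree) : nat :=
  match t with Leaf => 0%N | Node l r => (tcarets l + tcarets r).+1 end.

(* positions (0-based, left to right, among the leaves of t) of the leftmost
   leaf descending from each caret of t *)
Fixpoint tlmc (t : tree) : seq nat :=
  match t with
  | Leaf => [::]
  | Node l r => 0%N :: tlmc l ++ map (addn (tleaves l)) (tlmc r)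
  end.

(* positions k of the left leaf of each caret of t both of whose children
   are leaves (that caret has the leaves k and k+1) *)
Fixpoint tcherries (t : tree) : seq nat :=
  match t with
  | Leaf => [::]
  | Node Leaf Leaf => [:: 0%N]
  | Node l r => tcherries l ++ map (addn (tleaves l)) (tcherries r)
  end.

(* Binary forests: a sequence (T_i)_{i in Z} of trees, all but finitely many
   trivial; the pointer marks T_0.                                          *)
Record forest := Forest {
  ftree :> int -> tree;
  ftree_fin : exists N : nat, forall i : int, (N < `|i|)%N -> ftree i = Leaf }.

(* Leaves of a forest are numbered by integers ("own columns"), left to right,
   so that the leftmost leaf of T_0 (the marked tree) has number 0.
   fstart F i = number of the leftmost leaf of T_i. *)
Definition fstart (F : forest) (i : int) : int :=
  match i with
  | Posz n => (\sum_(j < n) tleaves (F (Posz j)))%:Z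
  | Negz n => - (\sum_(j < n.+1) tleaves (F (- (Posz j.+1))%R))%:Z
  end.

Definition fleaf (F : forest) (c i : int) (k : nat) : Prop :=
  (k < tleaves (F i))%N /\ (fstart F i + k%:Z = c)%R.

(* The space s of a forest is the gap between its own columns s and s+1. *)
(* exterior: the leaves on both sides belong to different trees, i.e. the
   leaf s+1 is the leftmost leaf of some tree *)
Definition fexterior (F : forest) (s : int) : Prop :=
  exists i : int, fstart F i = (s + 1)%R.

Definition fleft_of_caret (F : forest) (s : int) : Prop :=
  exists (i : int) (k : nat), k \in tlmc (F i) /\ (fstart F i + k%:Z = s + 1)%R.

Inductive label := lL | lN | lR | lI.

(* label of space s in forest F (using F's own pointer, which marks T_0,
   whose leftmost leaf is column 0): *)
Definition flabel (F : forest) (s : int) : label :=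
  if `[< fexterior F s /\ (s + 1 <= 0)%R >] then lL
  else if `[< fleft_of_caret F s >] then lN
  else if `[< fexterior F s >] then lR
  else lI.

(* weights, by (top, bottom) *)
Definition weight (t b : label) : nat :=
  match t, b with
  | lL, lL => 2 | lL, lN => 1 | lL, lR => 1 | lL, lI => 1
  | lN, lL => 1 | lN, lN => 2 | lN, lR => 2 | lN, lI => 2
  | lR, lL => 1 | lR, lN => 2 | lR, lR => 2 | lR, lI => 0
  | lI, lL => 1 | lI, lN => 2 | lI, lR => 0 | lI, lI => 0
  end%N.

(* The two forests share one linearly ordered set of
   leaves (columns), identified with Z via the numbering of the BOTTOM forest
   (column 0 = leftmost leaf of the bottom marked tree).  The top forest's own
   column t is the common column t + toff.  Every triple is a forest diagram
   of a unique element of F, and every forest diagram arises this way. *)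
Record fdiag := FDiag { ftop : forest; fbot : forest; toff : int }.

Definition top_label (D : fdiag) (s : int) : label := flabel (ftop D) (s - toff D)%R.
Definition bot_label (D : fdiag) (s : int) : label := flabel (fbot D) s.

(* columns that must be in the support: leaves of nontrivial trees of either
   forest and the leaves of the two marked trees *)
Definition special_col (D : fdiag) (c : int) : Prop :=
  (exists (i : int) (k : nat), fleaf (ftop D) (c - toff D)%R i k /\
      (ftop D i <> Leaf \/ i = 0%R)) \/
  (exists (i : int) (k : nat), fleaf (fbot D) c i k /\
      (fbot D i <> Leaf \/ i = 0%R)).

Definition supp_col (D : fdiag) (c : int) : Prop :=
  exists x y : int, special_col D x /\ special_col D y /\ (x <= c <= y)%R.

Definition supp_space (D : fdiag) (s : int) : Prop :=
  supp_col D s /\ supp_col D (s + 1)%R.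

Definition space_weight (D : fdiag) (s : int) : nat :=
  weight (top_label D s) (bot_label D s).

Local Open Scope classical_set_scope.

Definition ell0 (D : fdiag) : nat :=
  \big[addn/0%N]_(s \in [set s | supp_space D s]) space_weight D s.

Definition ell1 (D : fdiag) : nat :=
  \big[addn/0%N]_(i \in [set: int]) (tcarets (ftop D i) + tcarets (fbot D i))%N.

Definition ell (D : fdiag) : nat := (ell0 D + ell1 D)%N.

Local Close Scope classical_set_scope.

(* reduced: no opposing pair of carets (a top and a bottom caret, both with
   two leaf children, on the same two columns s, s+1) *)
Definition reduced (D : fdiag) : Prop :=
  ~ exists (s i j : int) (k m : nat),
      k \in tcherries (ftop D i) /\ (fstart (ftop D) i + k%:Z = s - toff D)%R /\
      m \in tcherries (fbot D j) /\ (fstart (fbot D) j + m%:Z = s)%R.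

(* Left multiplication by x0: move the top pointer one tree to the right. *)
Lemma fshift_fin (F : forest) :
  exists N : nat, forall i : int, (N < `|i|)%N -> F (i + 1)%R = Leaf.
Proof.
case: (ftree_fin F) => N HN; exists N.+1 => i Hi; apply: HN.
move: Hi; case: i => [n|n] /=; lia.
Qed.

Definition fshift (F : forest) : forest := Forest (fshift_fin F).

(* the forest diagram of x0 f from that of f: the new marked top tree is the
   old T_1; in the common numbering the top own columns move by the number
   of leaves of the old T_0 *)
Definition x0_diag (D : fdiag) : fdiag :=
  FDiag (fshift (ftop D)) (fbot D) (toff D + (tleaves (ftop D 0%R))%:Z)%R.

(* the right space of f: the space immediately to the right of the current
   tree (top T_0), in common numbering *)
Definition right_space (D : fdiag) : int :=
  ((tleaves (ftop D 0%R))%:Z - 1 + toff D)%R.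

From mathcomp Require Import all_boot all_order all_algebra.
From mathcomp Require Import boolp classical_sets cardinality fsbigop.
From mathcomp Require Import zify.
Set Implicit Arguments. Unset Strict Implicit. Unset Printing Implicit Defensive.
Import Order.TTheory GRing.Theory Num.Theory.
Local Open Scope ring_scope.

(* Left multiplication by x0 only moves the top pointer one tree to the right:
   the carets, the bottom forest and every top label except the one of the
   right space rs of f are unchanged, and the support can only change at the
   columns rs and rs+1 (the last leaf of the old current tree and the first
   leaf of the new one).  The top label of rs goes from N or R to L, so ell
   changes by the change of the weight of rs.  If rs is a support space before
   and after, the weight table gives +1 exactly when the bottom label is L or
   the pair was (R, I), and -1 otherwise.  If rs leaves the support, it lies
   left of the bottom pointer, so its pair was (N or R, L), of weight 1.  If it
   enters the support, the support grows, and its new pair (L, b) with b <> L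
   has weight 1. *)

Lemma tleaves_gt0 t : (0 < tleaves t)%N.
Proof. by elim: t => //= l Hl r Hr; lia. Qed.

Lemma eq_int_fun_by_increments (g h : int -> int) : g 0 = h 0 ->
  (forall i, g (i + 1) - g i = h (i + 1) - h i) -> forall i, g i = h i.
Proof.
move=> eq0 eqS; case=> n; elim: n => [|n IH].
- exact: eq0.
- have := eqS (Posz n); have -> : Posz n + 1 = Posz n.+1 by lia.
  by rewrite IH; lia.
- have := eqS (Negz 0); have -> : Negz 0 + 1 = 0 by [].
  by rewrite eq0; lia.
- have := eqS (Negz n.+1); have -> : Negz n.+1 + 1 = Negz n by lia.
  by rewrite IH; lia.
Qed.

Section ForestColumns.
Variable F : forest.

Lemma fstart0 : fstart F 0 = 0.
Proof. by rewrite -[0]/(Posz 0) /fstart big_ord0. Qed.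

Lemma fstartS i : fstart F (i + 1) = fstart F i + (tleaves (F i))%:Z.
Proof.
case: i => [n|[|n]].
- have -> : Posz n + 1 = Posz n.+1 by lia.
  by rewrite /fstart big_ord_recr /= PoszD.
- rewrite /fstart /= big_ord_recr !big_ord0 /=.
  have -> : - Posz 1 = Negz 0 by [].
  lia.
- have -> : Negz n.+1 + 1 = Negz n by lia.
  rewrite /fstart [in RHS]big_ord_recr /= PoszD.
  have -> : - Posz n.+2 = Negz n.+1 by lia.
  lia.
Qed.

Lemma fstart1 : fstart F 1 = (tleaves (F 0))%:Z.
Proof. by rewrite -[1]add0r fstartS fstart0 add0r. Qed.

Lemma fstart_le i j : i <= j -> fstart F i <= fstart F j.
Proof.
move=> le_ij; have -> : j = i + `|j - i|%N%:Z by lia.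
elim: `|j - i|%N => [|m IH]; first by rewrite addr0.
have -> : i + m.+1%:Z = i + m%:Z + 1 by lia.
by rewrite fstartS; have := tleaves_gt0 (F (i + m%:Z)); lia.
Qed.

Lemma fstart_ge_id (n : nat) : n%:Z <= fstart F n.
Proof.
elim: n => [|n IH]; first by rewrite fstart0.
have -> : Posz n.+1 = Posz n + 1 by lia.
by rewrite fstartS; have := tleaves_gt0 (F n); lia.
Qed.

Lemma fstart_le_id (n : nat) : fstart F (- n%:Z) <= - n%:Z.
Proof.
elim: n => [|n IH]; first by rewrite oppr0 fstart0.
have := fstartS (- n.+1%:Z); have -> : - n.+1%:Z + 1 = - n%:Z by lia.
by have := tleaves_gt0 (F (- n.+1%:Z)); lia.
Qed.

Lemma fleaf_exists c : exists i k, fleaf F c i k.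
Proof.
suff cover (m : nat) : forall c, fstart F (- m%:Z) <= c < fstart F m ->
    exists i k, fleaf F c i k.
  apply: (cover `|c|.+1).
  by have := fstart_ge_id `|c|.+1; have := fstart_le_id `|c|.+1; lia.
elim: m => [|m IH] {}c; first by rewrite oppr0 fstart0; lia.
have := fstartS m; have := fstartS (- m.+1%:Z).
have -> : - m.+1%:Z + 1 = - m%:Z by lia.
have -> : Posz m + 1 = Posz m.+1 by lia.
move=> Sneg Spos bounds.
case: (ltP c (fstart F (- m%:Z))) => [lt_c|le_c].
  by exists (- m.+1%:Z), `|c - fstart F (- m.+1%:Z)|%N; split; lia.
case: (ltP c (fstart F m)) => [lt_c|ge_c]; first by apply: IH; lia.
by exists (Posz m), `|c - fstart F m|%N; split; lia.
Qed.

Lemma fleaf_Leaf c i k : fleaf F c i k -> F i = Leaf -> k = 0%N.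
Proof. by case=> lt_k _ Fi; move: lt_k; rewrite Fi /=; lia. Qed.

Lemma fexterior_marked_last : fexterior F ((tleaves (F 0))%:Z - 1).
Proof. by exists 1; rewrite subrK fstart1. Qed.

Lemma fexterior_marked_inner s :
  0 < s + 1 < (tleaves (F 0))%:Z -> ~ fexterior F s.
Proof.
move=> bounds [i Ei].
case: (lerP i 0) => [le_i0|gt_i0].
  by have := fstart_le le_i0; rewrite fstart0; lia.
by have := @fstart_le 1 i ltac:(lia); rewrite fstart1; lia.
Qed.

Lemma fleaf_bounded : exists lo hi : int,
  forall c i k, fleaf F c i k -> (F i <> Leaf \/ i = 0) -> lo <= c <= hi.
Proof.
case: (ftree_fin F) => N HN.
exists (fstart F (- N%:Z)), (fstart F (N%:Z + 1)) => c i k [lt_k Ec] Hi.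
have Ni : - N%:Z <= i <= N%:Z.
  case: Hi => [Hi|->]; last by lia.
  by case: (leqP `|i|%N N) => [|/HN]; [lia|].
have := @fstart_le (- N%:Z) i ltac:(lia).
by have := @fstart_le (i + 1) (N%:Z + 1) ltac:(lia); rewrite fstartS; lia.
Qed.

End ForestColumns.

Lemma fstart_shift (F : forest) i :
  fstart (fshift F) i = fstart F (i + 1) - (tleaves (F 0))%:Z.
Proof.
apply: (eq_int_fun_by_increments (g := fstart (fshift F))
  (h := fun i => fstart F (i + 1) - (tleaves (F 0))%:Z)) => {i} [|i].
  by rewrite fstart0 fstart1; lia.
by rewrite !fstartS -[fshift F i]/(F (i + 1)); lia.
Qed.

Section ShiftedForest.
Variable F : forest.
Local Notation w := (tleaves (F 0))%:Z.

Lemma fleaf_shift c i k : fleaf (fshift F) c i k <-> fleaf F (c + w) (i + 1) k.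
Proof. by rewrite /fleaf fstart_shift; split=> -[? ?]; split=> //; lia. Qed.

Lemma fexterior_shift s : fexterior (fshift F) s <-> fexterior F (s + w).
Proof.
split=> -[i Ei]; first by exists (i + 1); move: Ei; rewrite fstart_shift; lia.
by exists (i - 1); rewrite fstart_shift subrK; lia.
Qed.

Lemma fleft_of_caret_shift s : fleft_of_caret (fshift F) s <-> fleft_of_caret F (s + w).
Proof.
split=> -[i [k [lmc_k Ek]]].
  by exists (i + 1), k; split=> //; move: Ek; rewrite fstart_shift; lia.
exists (i - 1), k; rewrite /= subrK; split=> //.
by rewrite fstart_shift subrK; lia.
Qed.

End ShiftedForest.

Lemma flabel_eq (F G : forest) s t :
  (fexterior F s <-> fexterior G t) ->
  (fleft_of_caret F s <-> fleft_of_caret G t) ->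
  (fexterior F s -> (s + 1 <= 0) = (t + 1 <= 0)) -> flabel F s = flabel G t.
Proof.
move=> ext_st lc_st sign_st; rewrite /flabel.
have marked_st : fexterior F s /\ s + 1 <= 0 <-> fexterior G t /\ t + 1 <= 0.
  split=> -[ext le]; have ext' := ext.
  - by move/ext_st in ext'; rewrite -sign_st.
  - by move/ext_st in ext'; rewrite sign_st.
by rewrite (propext marked_st) (propext lc_st) (propext ext_st).
Qed.

Lemma flabel_LP (F : forest) s :
  flabel F s = lL <-> fexterior F s /\ s + 1 <= 0.
Proof.
rewrite /flabel; split=> [|?]; last by rewrite asboolT.
by case: asboolP => // _; case: asboolP => // _; case: asboolP.
Qed.

Local Open Scope classical_set_scope.

Lemma weight_marked_top t b : t = lN \/ t = lR ->
  let grows := b = lL \/ t = lR /\ b = lI in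
  (grows /\ weight lL b = (weight t b).+1) \/
  (~ grows /\ (weight lL b).+1 = weight t b).
Proof.
by move=> [] ->; case: b => /=; [left|right|right|right|left|right|right|left];
   split=> //; (by [left|right; split]) || case=> // -[].
Qed.

Lemma special_col_marked_bot (D : fdiag) : special_col D 0.
Proof.
by right; exists 0, 0%N; split; [split; [exact: tleaves_gt0|rewrite fstart0]|right].
Qed.

Lemma supp_col_special (D : fdiag) c : special_col D c -> supp_col D c.
Proof. by move=> Sc; exists c, c; rewrite lexx. Qed.

Lemma supp_col_between (D : fdiag) a b c :
  supp_col D a -> supp_col D b -> a <= c <= b -> supp_col D c.
Proof.
move=> [x [y0 [Sx [_ le_xa]]]] [x0 [y [_ [Sy le_by]]]] le_acb.
by exists x, y; do 2!split=> //; lia.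
Qed.

Lemma supp_col_replace (X Y : fdiag) a b c :
  (forall x, special_col X x -> special_col Y x \/ x = a) ->
  special_col Y b -> b = a + 1 \/ b = a - 1 -> c <> a -> supp_col X c -> supp_col Y c.
Proof.
move=> XY Sb ab ca [x [y [Sx [Sy le_xcy]]]].
have [x' [Sx' le_xc]] : exists x', special_col Y x' /\ x' <= c.
  by case: (XY x Sx) => [|xa]; [exists x|exists b]; split=> //; lia.
have [y' [Sy' le_cy]] : exists y', special_col Y y' /\ c <= y'.
  by case: (XY y Sy) => [|ya]; [exists y|exists b]; split=> //; lia.
by exists x', y'; do 2!split=> //; lia.
Qed.

Lemma finite_set_int_bounded (A : set int) lo hi :
  (forall c, A c -> lo <= c <= hi) -> finite_set A.
Proof.
move=> A_bnd.
apply: (sub_finite_set (B := (fun k : nat => lo + k%:Z) @` `I_(`|hi - lo|.+1))).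
  by move=> c Ac; have := A_bnd c Ac; exists `|c - lo|%N; rewrite /= ?inE; lia.
exact/finite_image/finite_II.
Qed.

Lemma finite_supp_space (D : fdiag) : finite_set [set s | supp_space D s].
Proof.
case: (fleaf_bounded (ftop D)) => lo1 [hi1 top_bnd].
case: (fleaf_bounded (fbot D)) => lo2 [hi2 bot_bnd].
set lo := Num.min (lo1 + toff D) lo2; set hi := Num.max (hi1 + toff D) hi2.
have special_bnd x : special_col D x -> lo <= x <= hi.
  rewrite ge_min le_max => -[] [i [k [leaf_x Di]]].
  - by have := top_bnd _ _ _ leaf_x Di; lia.
  - by have := bot_bnd _ _ _ leaf_x Di; lia.
apply: (@finite_set_int_bounded _ lo hi) => s [[x [y [Sx [Sy le_xsy]]]] _].
by have := special_bnd _ Sx; have := special_bnd _ Sy; lia.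
Qed.

Lemma fsbig_addn_int (f g : int -> nat) (M : nat) :
  (forall i, (M < `|i|)%N -> f i = 0%N) -> (forall i, (M < `|i|)%N -> g i = 0%N) ->
  \big[addn/0%N]_(i \in [set: int]) (f i + g i)%N =
  (\big[addn/0%N]_(i \in [set: int]) f i + \big[addn/0%N]_(i \in [set: int]) g i)%N.
Proof.
move=> f0 g0; pose W := [set i : int | - M%:Z <= i <= M%:Z].
have to_window h : (forall i, (M < `|i|)%N -> h i = 0%N) ->
    \big[addn/0%N]_(i \in W) h i = \big[addn/0%N]_(i \in [set: int]) h i.
  move=> h0; apply: fsbig_widen => // i [_ Wi]; rewrite /= h0 //.
  by case: (leqP `|i|%N M) => // le_iM; case: Wi; rewrite /W /=; lia.
rewrite -!to_window //; last by move=> i Mi; rewrite f0 ?g0.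
by apply: fsbig_split; apply: (@finite_set_int_bounded _ (- M%:Z) M%:Z).
Qed.

Lemma ell1_x0 (D : fdiag) : ell1 (x0_diag D) = ell1 D.
Proof.
case: (ftree_fin (ftop D)) => N1 top0; case: (ftree_fin (fbot D)) => N2 bot0.
rewrite /ell1 /= !(@fsbig_addn_int _ _ (N1 + N2).+1);
  try by move=> i Ni; first [rewrite top0 //|rewrite bot0 //]; lia.
congr addn.
rewrite (reindex_fsbigT (fun i : int => i + 1) (fun i => tcarets (ftop D i))) //.
by exists (fun i => i - 1) => i; rewrite ?subrK ?addrK.
Qed.

Lemma ell0_in (D : fdiag) r : supp_space D r ->
  ell0 D = (space_weight D r +
    \big[addn/0%N]_(s \in [set s | supp_space D s] `\ r) space_weight D s)%N.
Proof. by move=> Sr; rewrite /ell0 (fsbigD1 r) //; apply: finite_supp_space. Qed.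

Lemma ell0_out (D : fdiag) r : ~ supp_space D r ->
  ell0 D = \big[addn/0%N]_(s \in [set s | supp_space D s] `\ r) space_weight D s.
Proof.
move=> nSr; rewrite /ell0; apply: eq_fsbigl; apply/seteqP; split=> s /=.
- by move=> Ss; split=> // Esr; apply: nSr; rewrite -Esr.
- by case.
Qed.

Definition x0_support_grows (D : fdiag) : Prop :=
  (forall c, supp_col D c -> supp_col (x0_diag D) c) /\
  exists c, supp_col (x0_diag D) c /\ ~ supp_col D c.

Definition x0_lengthens (D : fdiag) : Prop :=
  let rs := right_space D in
  x0_support_grows D
  \/ (supp_space D rs /\ bot_label D rs = lL /\ supp_space (x0_diag D) rs)
  \/ (supp_space D rs /\ top_label D rs = lR /\ bot_label D rs = lI).

Section LeftMultiplicationByX0.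
Variable D : fdiag.
Local Notation T := (ftop D).
Local Notation o := (toff D).
Local Notation w := (tleaves (ftop D 0))%:Z.
Local Notation D' := (x0_diag D).
Local Notation rs := (right_space D).

Lemma top_label_x0 s : s <> rs -> top_label D' s = top_label D s.
Proof.
rewrite /right_space => neq_s; rewrite /top_label /=.
have Es : s - (o + w) + w = s - o by lia.
apply: flabel_eq; rewrite ?fexterior_shift ?fleft_of_caret_shift Es //.
move=> ext; have := tleaves_gt0 (T 0).
case: (ltP 0 (s - o + 1)) => [gt0|]; last by lia.
case: (ltP (s - o + 1) w) => [ltw|]; last by lia.
by case: (fexterior_marked_inner (s := s - o) _ ext); rewrite gt0.
Qed.

Lemma top_label_x0_rs : top_label D' rs = lL.
Proof.
apply/flabel_LP; rewrite /right_space /= fexterior_shift.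
have -> : w - 1 + o - (o + w) + w = w - 1 by lia.
by split; [exact: fexterior_marked_last|lia].
Qed.

Lemma top_label_rs : top_label D rs = lN \/ top_label D rs = lR.
Proof.
rewrite /top_label /right_space /flabel addrK.
rewrite asboolF; last by have := tleaves_gt0 (T 0); lia.
case: asboolP => _; first by left.
by rewrite asboolT; [right|exact: fexterior_marked_last].
Qed.

Lemma special_col_rs : special_col D rs.
Proof.
left; exists 0, (tleaves (T 0)).-1; split; last by right.
by have := tleaves_gt0 (T 0); split; rewrite ?fstart0 /right_space; lia.
Qed.

Lemma special_col_x0_rs1 : special_col D' (rs + 1).
Proof.
left; exists 0, 0%N; split; last by right.
by split; [exact: tleaves_gt0|rewrite fstart0 /right_space /=; lia].
Qed.

Lemma special_col_x0 c : special_col D' c -> special_col D c \/ c = rs + 1.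
Proof.
case=> [[i [k [leaf_c Ti]]]|bot_c]; last by left; right.
move/fleaf_shift: leaf_c; rewrite /= (_ : c - (o + w) + w = c - o); last by lia.
move=> leaf_c; have [T1|T1] := EM (T (i + 1) = Leaf).
- case: Ti => [//|i0]; right; rewrite i0 in leaf_c T1.
  move: leaf_c (fleaf_Leaf leaf_c T1) => [_]; rewrite add0r fstart1 /right_space.
  lia.
- by left; left; exists (i + 1), k; split=> //; left.
Qed.

Lemma special_col_of_x0 c : special_col D c -> special_col D' c \/ c = rs.
Proof.
case=> [[i [k [leaf_c Ti]]]|bot_c]; last by left; right.
have [T0|T0] := EM (T i = Leaf).
- case: Ti => [//|i0]; right; rewrite i0 in leaf_c T0.
  move: leaf_c (fleaf_Leaf leaf_c T0) => [_]; rewrite fstart0 /right_space T0 /=.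
  lia.
- left; left; exists (i - 1), k; split; last by left; rewrite /= subrK.
  by apply/fleaf_shift; rewrite subrK /= (_ : c - (o + w) + w = c - o) //; lia.
Qed.

Lemma supp_col_x0 c : c <> rs -> c <> rs + 1 -> supp_col D c <-> supp_col D' c.
Proof.
move=> c_rs c_rs1; split; apply: supp_col_replace.
- exact: special_col_of_x0.
- exact: special_col_x0_rs1.
- by left.
- by [].
- exact: special_col_x0.
- exact: special_col_rs.
- by right; rewrite addrK.
- by [].
Qed.

Lemma supp_space_x0 s : s <> rs -> supp_space D s <-> supp_space D' s.
Proof.
move=> s_rs; rewrite /supp_space.
have S_rs := supp_col_special special_col_rs.
have S'_rs1 := supp_col_special special_col_x0_rs1.
have [->|s_rs1] := EM (s = rs + 1).
  rewrite -!(supp_col_x0 (c := rs + 1 + 1)); try lia.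
  split=> -[S1 S2]; split=> //.
  by apply: (supp_col_between S_rs S2); lia.
have [->|s_rs'] := EM (s = rs - 1).
  have E := supp_col_x0 (c := rs - 1) ltac:(lia) ltac:(lia).
  rewrite subrK -E; split=> -[S1 S2]; split=> //.
  by apply: (supp_col_between (a := rs - 1) _ S'_rs1); [exact/E|lia].
by rewrite (supp_col_x0 (c := s)) ?(supp_col_x0 (c := s + 1)) //; lia.
Qed.

Lemma fsbig_weights_off_rs_x0 :
  \big[addn/0%N]_(s \in [set s | supp_space D' s] `\ rs) space_weight D' s =
  \big[addn/0%N]_(s \in [set s | supp_space D s] `\ rs) space_weight D s.
Proof.
have -> : [set s | supp_space D' s] `\ rs = [set s | supp_space D s] `\ rs.
  by apply/seteqP; split=> s [Ss s_rs]; split=> //; apply/(supp_space_x0 s_rs).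
by apply: eq_fsbigr => s /[!inE] -[_ s_rs]; rewrite /space_weight top_label_x0.
Qed.

Lemma supp_space_rs_or_x0 : supp_space D rs \/ supp_space D' rs.
Proof.
have S_rs := supp_col_special special_col_rs.
have S'_rs1 := supp_col_special special_col_x0_rs1.
have S_0 := supp_col_special (special_col_marked_bot D).
have S'_0 := supp_col_special (special_col_marked_bot D').
case: (lerP (rs + 1) 0) => [le0|gt0].
  by left; split=> //; apply: (supp_col_between S_rs S_0); lia.
by right; split=> //; apply: (supp_col_between S'_0 S'_rs1); lia.
Qed.

Local Notation ell0_x0_spec :=
  ((x0_lengthens D /\ ell0 D' = (ell0 D).+1) \/
   (~ x0_lengthens D /\ (ell0 D').+1 = ell0 D)).

Lemma ell0_x0_stay : supp_space D rs -> supp_space D' rs -> ell0_x0_spec.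
Proof.
move=> S_rs S'_rs.
have no_growth : ~ x0_support_grows D.
  move=> [_ [c [S'c nSc]]]; apply: nSc.
  have [->|c_rs] := EM (c = rs); first by case: S_rs.
  have [->|c_rs1] := EM (c = rs + 1); first by case: S_rs.
  exact/(supp_col_x0 c_rs c_rs1).
have lengthens_iff : x0_lengthens D <->
    bot_label D rs = lL \/ top_label D rs = lR /\ bot_label D rs = lI.
  split; first by case=> [/no_growth[]|[[_ [? _]]|[_ ?]]]; [left|right].
  by case=> [?|?]; right; [left|right].
rewrite (ell0_in S_rs) (ell0_in S'_rs) fsbig_weights_off_rs_x0 /space_weight.
rewrite top_label_x0_rs -[bot_label D' rs]/(bot_label D rs).
have [[? Ew]|[? Ew]] := weight_marked_top (bot_label D rs) top_label_rs;
  [left|right]; (split; [by rewrite lengthens_iff|lia]).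
Qed.

Lemma ell0_x0_leave : supp_space D rs -> ~ supp_space D' rs -> ell0_x0_spec.
Proof.
move=> S_rs nS'_rs; right.
have S'_rs1 := supp_col_special special_col_x0_rs1.
have nS'rs : ~ supp_col D' rs by move=> S'rs; apply: nS'_rs.
have neg_rs : rs + 1 <= 0.
  case: (lerP (rs + 1) 0) => // pos; case: nS'rs.
  by apply: (supp_col_between (supp_col_special (special_col_marked_bot D')) S'_rs1); lia.
have bot_L : bot_label D rs = lL.
  apply/flabel_LP; split=> //.
  case: (fleaf_exists (fbot D) (rs + 1)) => i [[|k] [lt_k Ek]].
    by exists i; rewrite -Ek addr0.
  case: nS'rs; apply/supp_col_special; right; exists i, k.
  split; first by rewrite /fleaf /=; split; lia.
  by left=> Bi; move: lt_k; rewrite Bi.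
split.
  case=> [[grows _]|[[_ [_ ?]]|[_ [_ ]]]] //; last by rewrite bot_L.
  by case: nS'rs; apply: grows; case: S_rs.
rewrite (ell0_in S_rs) (ell0_out nS'_rs) fsbig_weights_off_rs_x0 /space_weight bot_L.
by case: top_label_rs => ->.
Qed.

Lemma ell0_x0_enter : ~ supp_space D rs -> supp_space D' rs -> ell0_x0_spec.
Proof.
move=> nS_rs S'_rs; left.
have S_rs := supp_col_special special_col_rs.
have nS_rs1 : ~ supp_col D (rs + 1) by move=> S_rs1; apply: nS_rs.
split.
  left; split=> [c Sc|]; last first.
    by exists (rs + 1); split=> //; apply/supp_col_special/special_col_x0_rs1.
  have [->|c_rs] := EM (c = rs); first by case: S'_rs.
  have [c_rs1|c_rs1] := EM (c = rs + 1); first by rewrite c_rs1 in Sc.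
  exact/(supp_col_x0 c_rs c_rs1).
have bot_nL : bot_label D rs <> lL.
  move=> /flabel_LP [_ neg_rs]; apply: nS_rs1.
  by apply: (supp_col_between S_rs (supp_col_special (special_col_marked_bot D))); lia.
rewrite (ell0_out nS_rs) (ell0_in S'_rs) fsbig_weights_off_rs_x0 /space_weight.
rewrite top_label_x0_rs -[bot_label D' rs]/(bot_label D rs).
by case: (bot_label D rs) bot_nL.
Qed.

Lemma ell0_x0 : ell0_x0_spec.
Proof.
have [S_rs|nS_rs] := EM (supp_space D rs);
  have [S'_rs|nS'_rs] := EM (supp_space D' rs).
- exact: ell0_x0_stay.
- exact: ell0_x0_leave.
- exact: ell0_x0_enter.
- by case: supp_space_rs_or_x0.
Qed.

End LeftMultiplicationByX0.

Local Close Scope classical_set_scope.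

Theorem proposition4p3p3 (D : fdiag) :
  reduced D ->
  let D' := x0_diag D in
  let rs := right_space D in
  let cond :=
    (* (1) the reduced diagram of x0 f has larger support than that of f *)
    ((forall c, supp_col D c -> supp_col D' c) /\
       exists c, supp_col D' c /\ ~ supp_col D c)
    (* (2) right space of f has bottom label L and stays in the support *)
    \/ (supp_space D rs /\ bot_label D rs = lL /\ supp_space D' rs)
    (* (3) right space of f has label pair (R, I) *)
    \/ (supp_space D rs /\ top_label D rs = lR /\ bot_label D rs = lI) in
  (cond -> ell D' = (ell D + 1)%N) /\ (~ cond -> (ell D' + 1)%N = ell D).
Proof.
move=> _; cbv zeta; rewrite /ell ell1_x0.
have [[lengthens ell0E]|[shortens ell0E]] := ell0_x0 D.
- by split=> [_|not_cond]; [lia|case: (not_cond lengthens)].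
- by split=> [/shortens//|_]; lia.
Qed.
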